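(* Let $K=2$ and suppose that for every horizon $T$ (a multiple of $100$) a valid pair $(\eta,\gamma)=(\eta_T,\gamma_T)$ in the non-trivial regime is chosen. Then there exist constants $c_1,c_2,c_3>0$ and $T_0$ such that for all $T\ge T_0$, WSU-UX run on the two-phase loss sequence satisfies $$\mathbb{E}[\mathcal R_T]\ge c_1\frac1\eta+c_2\frac{\eta TK}{\gamma}+c_3\gamma T.$$
   Context: WSU-UX. Fix integers $K\ge 2$ and $T\ge 1$ and hyperparameters $\eta,\gamma$. The pair $(\eta,\gamma)$ is called valid if $\eta,\gamma\in(0,1/2)$ and $\eta K/\gamma\le 1/2$. Given a fixed loss sequence $\ell_t\in[0,1]^K$, WSU-UX sets $\pi_{1,i}=1/K$ and in each round $t$: forms $\tilde\pi_{t,i}=(1-\gamma)\pi_{t,i}+\gamma/K$; draws $I_t$ with $\Pr(I_t=i\mid\mathcal F_{t-1})=\tilde\pi_{t,i}$; sets $\hat\ell_{t,i}=\ell_{t,i}\mathbf 1[I_t=i]/\tilde\pi_{t,i}$; and updates $\pi_{t+1,i}=\pi_{t,i}\bigl(1-\eta(\hat\ell_{t,i}-\sum_{j}\pi_{t,j}\hat\ell_{t,j})\bigr)$; $\mathcal F_t$ is the history generated by $I_1,\dots,I_t$. The regret is $\mathbb{E}[\mathcal R_T]=\mathbb{E}[\sum_{t}\sum_{j}\tilde\pi_{t,j}\ell_{t,j}]-\min_i\sum_t\ell_{t,i}$. Non-trivial regime: $\eta\ge T^{-2/3}$ and $\gamma\le T^{-1/3}$. Two-phase loss sequence ($K=2$,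 $T$ a multiple of $100$, $T_1=T/100$): $\ell_{t,1}=1,\ell_{t,2}=0$ for $1\le t\le T_1$ and $\ell_{t,1}=0,\ell_{t,2}=1$ for $T_1<t\le T$. *)

From HB Require Import structures.
From mathcomp Require Import all_boot all_order all_algebra.
From mathcomp Require Import all_classical all_reals all_analysis.
Set Implicit Arguments. Unset Strict Implicit. Unset Printing Implicit Defensive.
Import Order.TTheory GRing.Theory Num.Theory.
Local Open Scope ring_scope.

Section WSUUX.
Variable R : realType.

Definition valid (K : nat) (eta gamma : R) : Prop :=
  0 < eta /\ eta < 1/2 /\ 0 < gamma /\ gamma < 1/2 /\ eta * K%:R / gamma <= 1/2.

Definition nontrivial (T : nat) (eta gamma : R) : Prop :=
  (T%:R `^ (- (2 / 3))) <= eta /\ gamma <= (T%:R `^ (- (1 / 3))).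

Definition mix (K : nat) (gamma : R) (pi : 'I_K -> R) (i : 'I_K) : R :=
  (1 - gamma) * pi i + gamma / K%:R.

Definition lhat (K : nat) (gamma : R) (pi : 'I_K -> R) (lt : 'I_K -> R)
    (I : 'I_K) (i : 'I_K) : R :=
  lt i * (i == I)%:R / mix gamma pi i.

Definition update (K : nat) (eta gamma : R) (pi : 'I_K -> R) (lt : 'I_K -> R)
    (I : 'I_K) (i : 'I_K) : R :=
  pi i * (1 - eta * (lhat gamma pi lt I i
                     - \sum_(j < K) pi j * lhat gamma pi lt I j)).

(* Expected cumulative mixed loss  E[ sum_{s=t}^{t+n-1} sum_j tilde pi_{s,j} l_{s,j} ]
   starting at round t from weights pi, computed exactly by conditioning on the
   draw I_s (Pr(I_s = i | F_{s-1}) = tilde pi_{s,i}). *)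
Fixpoint expLoss (K : nat) (eta gamma : R) (l : nat -> 'I_K -> R)
    (n t : nat) (pi : 'I_K -> R) : R :=
  match n with
  | 0 => 0
  | n'.+1 =>
      \sum_(j < K) mix gamma pi j * l t j
      + \sum_(i < K) mix gamma pi i *
          expLoss eta gamma l n' t.+1 (update eta gamma pi (l t) i)
  end.

Definition expRegret (k : nat) (eta gamma : R) (l : nat -> 'I_k.+1 -> R)
    (T : nat) : R :=
  expLoss eta gamma l T 1 (fun _ => 1 / k.+1%:R)
  - \big[Num.min/ \sum_(1 <= t < T.+1) l t ord0]_(i < k.+1)
        \sum_(1 <= t < T.+1) l t i.

(* Two-phase loss sequence, K = 2, T1 = T/100; arm 1 = ord0, arm 2 = ord_max. *)
Definition two_phase (T : nat) (t : nat) (i : 'I_2) : R :=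
  if (t <= T %/ 100)%N then (if i == ord0 then 1 else 0)
  else (if i == ord0 then 0 else 1).

End WSUUX.

From HB Require Import structures.
From mathcomp Require Import all_boot all_order all_algebra.
From mathcomp Require Import all_classical all_reals all_analysis.
From mathcomp Require Import ring lra zify.
Import Order.TTheory GRing.Theory Num.Theory.
Local Open Scope ring_scope.
Set Implicit Arguments. Unset Strict Implicit.

(* With two arms the state of WSU-UX is the weight [x] of arm 1, and the expected
   mixed loss of rounds [t..T] satisfies a one-round recursion over the drawn arm.
   A potential [V_t(x) = g/2 (T+1-t) + (1-g) psi_t(x)] with
   [psi_t(x) = -ln x / e - kappa_t (1-x)/(e x) + a_t - mu_t x/(1-x)] is shown by
   backward induction to lie below that expected loss: in each round the drift of
   [ln x] under the multiplicative update pays for the round's loss.  In the second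
   half of phase 1 the curvature of [ln] gains about [e/g] per round (the term
   [mu_t x/(1-x)] covers the rounds where [x] is not yet small), so [a_1] contains
   [e T/g] up to constants; forced exploration costs [g T/2], and [1/e <= e T/g] in
   the non-trivial regime, whence the three terms at [x = 1/2]. *)

Ltac nonzero :=
  repeat match goal with |- is_true (_ != 0) => apply/lt0r_neq0 end;
  repeat match goal with
  | |- is_true (0 < _ * _) => apply: mulr_gt0
  | |- is_true (0 < _ ^+ _) => apply: exprn_gt0
  end;
  try assumption; try lra.

Section LogInequalities.
Variable R : realType.

Lemma ln_le_subr1 (x : R) : 0 < x -> ln x <= x - 1.
Proof. by move=> x_gt0; have := @le_ln1Dx R (x - 1); rewrite addrCA subrr addr0; apply; lra. Qed.

Lemma oppr_ln_le (x : R) : 0 < x -> - ln x <= (1 - x) / x.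
Proof.
move=> x_gt0; rewrite -lnV ?posrE // mulrBl divff ?gt_eqF // mul1r.
by apply: ln_le_subr1; rewrite invr_gt0.
Qed.

Lemma ln1B_le (v : R) : 0 <= v -> v <= 1/2 -> ln (1 - v) <= - v - v ^+ 2 / 4.
Proof.
(* [1 - v <= s^2] for [s = 1 - v/2 - v^2/8], and [ln (s^2) <= 2 (s - 1)]. *)
move=> v_ge0 v_le; set s := 1 - v / 2 - v ^+ 2 / 8.
have s_gt0 : 0 < s by rewrite /s; nra.
have : ln (1 - v) <= ln (s * s) by rewrite ler_ln ?posrE ?mulr_gt0 /s //; nra.
rewrite lnM ?posrE //; have := ln_le_subr1 s_gt0; rewrite /s; lra.
Qed.

End LogInequalities.

(* [lra] and [nra] ignore section hypotheses: the ones they need are restated with [have]. *)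
Section OneRound.
Variables (R : realType) (e g : R).
Hypotheses (e_gt0 : 0 < e) (e_lt_half : e < 1/2).
Hypotheses (g_gt0 : 0 < g) (g_lt_half : g < 1/2) (e_le_g : 4 * e <= g).

Definition pmix (x : R) := (1 - g) * x + g / 2.

Definition down_rate (x : R) := e * (1 - x) / pmix x.

Definition up_rate (x : R) := e * (1 - x) / pmix (1 - x).

Definition potential (k a m x : R) :=
  - ln x / e - k * ((1 - x) / x) / e + a - m * (x / (1 - x)).

Lemma pmixC (x : R) : pmix (1 - x) = 1 - pmix x.
Proof. rewrite /pmix; lra. Qed.

Lemma pmix_ge_gamma (x : R) : 0 <= x -> g / 2 <= pmix x.
Proof.
move=> x_ge0; have := g_lt_half; have : 0 <= g * x by apply: mulr_ge0 => //; exact: ltW.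
rewrite /pmix; nra.
Qed.

Lemma pmix_ge_half (x : R) : 0 <= x -> x / 2 <= pmix x.
Proof. move=> x_ge0; have := g_lt_half; have := g_gt0; rewrite /pmix; nra. Qed.

Lemma pmix_gt0 (x : R) : 0 <= x -> 0 < pmix x.
Proof. by move/pmix_ge_gamma; have := g_gt0; lra. Qed.

Variable x : R.
Hypotheses (x_gt0 : 0 < x) (x_lt1 : x < 1).

Lemma pmix_down_rate : pmix x * down_rate x = e * (1 - x).
Proof. by rewrite /down_rate mulrCA divff ?mulr1 // gt_eqF // pmix_gt0 // ltW. Qed.

Lemma pmix_up_rate : pmix (1 - x) * up_rate x = e * (1 - x).
Proof. by rewrite /up_rate mulrCA divff ?mulr1 // gt_eqF // pmix_gt0 // subr_ge0 ltW. Qed.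

Lemma down_rate_ge0 : 0 <= down_rate x.
Proof. by rewrite divr_ge0 ?mulr_ge0 ?ltW ?pmix_gt0 ?subr_gt0 // ltW. Qed.

Lemma down_rate_le_half : down_rate x <= 1/2.
Proof.
rewrite -(ler_pM2l (pmix_gt0 (ltW x_gt0))) pmix_down_rate.
have := pmix_ge_gamma (ltW x_gt0); have := e_le_g; have := e_gt0; have := x_gt0.
nra.
Qed.

Lemma up_rate_ge0 : 0 <= up_rate x.
Proof. by rewrite divr_ge0 ?mulr_ge0 ?ltW ?pmix_gt0 ?subr_gt0 ?subr_ge0 // ltW. Qed.

Lemma up_rate_le_eta : up_rate x <= 2 * e.
Proof.
have x_le1 : 0 <= 1 - x by rewrite subr_ge0 ltW.
rewrite -(ler_pM2l (pmix_gt0 x_le1)) pmix_up_rate.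
have := pmix_ge_half x_le1; have := e_gt0; have := x_lt1; nra.
Qed.

Lemma up_rate_le_compl : up_rate x <= (1 - x) / 2.
Proof.
have x_le1 : 0 <= 1 - x by rewrite subr_ge0 ltW.
rewrite -(ler_pM2l (pmix_gt0 x_le1)) pmix_up_rate.
have := pmix_ge_gamma x_le1; have := e_le_g; have := e_gt0; have := x_lt1; nra.
Qed.

Lemma ln_drift_phase1 :
  pmix x * ln (x * (1 - down_rate x)) + (1 - pmix x) * ln x
  <= ln x - e * (1 - x) - e ^+ 2 * (1 - x) ^+ 2 / (4 * pmix x).
Proof.
have P_gt0 := pmix_gt0 (ltW x_gt0); have Pv := pmix_down_rate.
have v_ge0 := down_rate_ge0; have v_le := down_rate_le_half.
set P := pmix x in P_gt0 Pv *; set v := down_rate x in Pv v_ge0 v_le *.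
have x0 := x_gt0; rewrite lnM ?posrE //; last by lra.
have : P * ln (1 - v) <= P * (- v - v ^+ 2 / 4) by rewrite ler_pM2l // ln1B_le.
have -> : P * (- v - v ^+ 2 / 4) = - (P * v) - (P * v) ^+ 2 / (4 * P) by field; nonzero.
rewrite Pv; lra.
Qed.

Lemma ratio_drift_phase1 :
  pmix x * ((1 - x * (1 - down_rate x)) / (x * (1 - down_rate x)))
  + (1 - pmix x) * ((1 - x) / x) <= (1 + 2 * e) * ((1 - x) / x).
Proof.
have P_gt0 := pmix_gt0 (ltW x_gt0); have Pv := pmix_down_rate.
have v_ge0 := down_rate_ge0; have v_le := down_rate_le_half.
set P := pmix x in P_gt0 Pv *; set v := down_rate x in Pv v_ge0 v_le *.
have x0 := x_gt0; have x1 := x_lt1; have e0 := e_gt0.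
have -> : P * ((1 - x * (1 - v)) / (x * (1 - v))) + (1 - P) * ((1 - x) / x)
   = (1 - x) / x * (1 + P * v / (1 - x) / (1 - v)) by field; nonzero.
rewrite Pv mulfK ?gt_eqF ?subr_gt0 //.
have r_ge0 : 0 <= (1 - x) / x by apply: divr_ge0; lra.
have : e / (1 - v) <= 2 * e by rewrite ler_pdivrMr; nra.
by move/(ler_wpM2l r_ge0); lra.
Qed.

Lemma odds_drift_phase1 :
  pmix x * (x * (1 - down_rate x) / (1 - x * (1 - down_rate x)))
  + (1 - pmix x) * (x / (1 - x)) <= (1 - e / 2) * (x / (1 - x)).
Proof.
have P_gt0 := pmix_gt0 (ltW x_gt0); have Pv := pmix_down_rate.
have v_ge0 := down_rate_ge0; have x_le := pmix_ge_half (ltW x_gt0).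
set P := pmix x in P_gt0 Pv x_le *; set v := down_rate x in Pv v_ge0 *.
have x0 := x_gt0; have x1 := x_lt1; have e0 := e_gt0; have e1 := e_lt_half.
have D_gt0 : 0 < 1 - x + x * v by nra.
have -> : P * (x * (1 - v) / (1 - x * (1 - v))) + (1 - P) * (x / (1 - x))
   = x / (1 - x) * (1 - P * v / (1 - x + x * v)).
  by rewrite (_ : 1 - x * (1 - v) = 1 - x + x * v); [field; nonzero | ring].
have xv_le : x * v <= 1 - x by nra.
have : e / 2 <= P * v / (1 - x + x * v) by rewrite Pv ler_pdivlMr //; nra.
have r_ge0 : 0 <= x / (1 - x) by apply: divr_ge0; lra.
by move/(lerB (lexx 1))/(ler_wpM2l r_ge0); lra.
Qed.

Lemma sqr_compl_div_pmix_ge : 1 / (6 * g) - x / (6 * g ^+ 2) <= (1 - x) ^+ 2 / pmix x.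
Proof.
have P_gt0 := pmix_gt0 (ltW x_gt0); have g0 := g_gt0; have g1 := g_lt_half.
have x0 := x_gt0; have x1 := x_lt1.
have rhs_ge0 : 0 <= (1 - x) ^+ 2 / pmix x by rewrite divr_ge0 ?sqr_ge0 ?ltW.
have [g_le_x | x_lt_g] := leP g x.
  suff : 1 / (6 * g) - x / (6 * g ^+ 2) <= 0 by lra.
  have -> : 1 / (6 * g) - x / (6 * g ^+ 2) = (g - x) / (6 * g ^+ 2) by field; nonzero.
  by rewrite pmulr_lle0 ?invr_gt0; nonzero.
have : 0 <= x / (6 * g ^+ 2) by rewrite divr_ge0 ?mulr_ge0 ?sqr_ge0; lra.
suff : 1 / (6 * g) <= (1 - x) ^+ 2 / pmix x by lra.
rewrite ler_pdivlMr // mul1r mulrC ler_pdivrMr; last by lra.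
have : 1/4 <= (1 - x) ^+ 2 by rewrite expr2; nra.
move/(ler_wpM2r (_ : 0 <= 6 * g)); rewrite /pmix; nra.
Qed.

Lemma ln_drift_phase2 :
  pmix (1 - x) * ln (x * (1 + up_rate x)) + (1 - pmix (1 - x)) * ln x
  <= ln x + e * (1 - x).
Proof.
have Q_gt0 : 0 < pmix (1 - x) by rewrite pmix_gt0 // subr_ge0 ltW.
have Qw := pmix_up_rate; have w_ge0 := up_rate_ge0.
set Q := pmix (1 - x) in Q_gt0 Qw *; set w := up_rate x in Qw w_ge0 *.
have x0 := x_gt0; rewrite lnM ?posrE //; last by lra.
have : Q * ln (1 + w) <= Q * w by rewrite ler_pM2l // le_ln1Dx //; lra.
rewrite Qw; lra.
Qed.

Lemma ratio_drift_phase2 :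
  pmix (1 - x) * ((1 - x * (1 + up_rate x)) / (x * (1 + up_rate x)))
  + (1 - pmix (1 - x)) * ((1 - x) / x) <= (1 - e / 2) * ((1 - x) / x).
Proof.
have Q_gt0 : 0 < pmix (1 - x) by rewrite pmix_gt0 // subr_ge0 ltW.
have Qw := pmix_up_rate; have w_ge0 := up_rate_ge0; have w_le := up_rate_le_eta.
set Q := pmix (1 - x) in Q_gt0 Qw *; set w := up_rate x in Qw w_ge0 w_le *.
have x0 := x_gt0; have x1 := x_lt1; have e0 := e_gt0; have e1 := e_lt_half.
have -> : Q * ((1 - x * (1 + w)) / (x * (1 + w))) + (1 - Q) * ((1 - x) / x)
   = (1 - x) / x * (1 - Q * w / (1 - x) / (1 + w)) by field; nonzero.
rewrite Qw mulfK ?gt_eqF ?subr_gt0 //.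
have r_ge0 : 0 <= (1 - x) / x by apply: divr_ge0; lra.
have : e / 2 <= e / (1 + w) by rewrite ler_pdivlMr; nra.
by move/(lerB (lexx 1))/(ler_wpM2l r_ge0); lra.
Qed.

Lemma curvature_bonus (b : bool) (m m' : R) :
  (1 - e / 2) * m + b%:R * (e / (24 * g ^+ 2)) <= m' ->
  b%:R * (e / (24 * g)) <= e * (1 - x) ^+ 2 / (4 * pmix x) + (m' - (1 - e / 2) * m) * (x / (1 - x)).
Proof.
have P_gt0 := pmix_gt0 (ltW x_gt0); have lb := sqr_compl_div_pmix_ge.
have x0 := x_gt0; have x1 := x_lt1; have e0 := e_gt0; have g0 := g_gt0.
have -> : e * (1 - x) ^+ 2 / (4 * pmix x) = e / 4 * ((1 - x) ^+ 2 / pmix x) by field; nonzero.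
have r_ge0 : 0 <= (1 - x) ^+ 2 / pmix x by rewrite divr_ge0 ?sqr_ge0 ?ltW.
have x_le : x <= x / (1 - x) by rewrite ler_pdivlMr; nra.
have c_ge0 : 0 <= e / (24 * g ^+ 2) by apply: divr_ge0; [lra | apply: mulr_ge0; [lra | exact: sqr_ge0]].
case: b => /=; rewrite ?mul1r ?mul0r ?addr0 => m_le.
  have := ler_wpM2l (ltW (divr_gt0 e0 (ltr0n _ 4))) lb.
  have -> : e / 4 * (1 / (6 * g) - x / (6 * g ^+ 2)) = e / (24 * g) - e / (24 * g ^+ 2) * x.
    by field; nonzero.
  have := ler_wpM2l c_ge0 x_le.
  have : e / (24 * g ^+ 2) * (x / (1 - x)) <= (m' - (1 - e / 2) * m) * (x / (1 - x)).
    by apply: ler_wpM2r; [apply: divr_ge0 | ]; lra.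
  lra.
have : 0 <= (m' - (1 - e / 2) * m) * (x / (1 - x)) by apply: mulr_ge0; [lra | apply: divr_ge0; lra].
have : 0 <= e / 4 * ((1 - x) ^+ 2 / pmix x) by apply: mulr_ge0 => //; lra.
lra.
Qed.

Lemma potential_step_phase1 (b : bool) (k a m m' : R) : 0 <= k -> 0 <= m ->
  (1 - e / 2) * m + b%:R * (e / (24 * g ^+ 2)) <= m' ->
  potential ((1 + 2 * e) * k) (a + 1 + b%:R * (e / (24 * g))) m' x
  <= x + pmix x * potential k a m (x * (1 - down_rate x))
       + (1 - pmix x) * potential k a m x.
Proof.
move=> k_ge0 m_ge0 m_le; have bonus := curvature_bonus m_le.
have lnD := ln_drift_phase1; have ratioD := ler_wpM2l k_ge0 ratio_drift_phase1.
have oddsD := ler_wpM2l m_ge0 odds_drift_phase1.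
have e0 := e_gt0; have P_gt0 := pmix_gt0 (ltW x_gt0).
set P := pmix x in lnD ratioD oddsD bonus P_gt0 *.
set y := x * (1 - down_rate x) in lnD ratioD oddsD *.
set rx := (1 - x) / x in ratioD *; set ox := x / (1 - x) in oddsD bonus *.
have lnD' : - ln x / e + (1 - x) + e * (1 - x) ^+ 2 / (4 * P)
            <= - (P * ln y + (1 - P) * ln x) / e.
  have -> : - ln x / e + (1 - x) + e * (1 - x) ^+ 2 / (4 * P)
          = - (ln x - e * (1 - x) - e ^+ 2 * (1 - x) ^+ 2 / (4 * P)) / e by field; nonzero.
  by rewrite ler_pM2r ?invr_gt0 // lerN2.
have ratioD' : - (k * ((1 + 2 * e) * rx)) / e
               <= - (k * (P * ((1 - y) / y) + (1 - P) * rx)) / e.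
  by rewrite ler_pM2r ?invr_gt0 // lerN2.
rewrite /potential -/rx -/ox.
lra.
Qed.

Lemma potential_step_phase2 (k a : R) : 0 <= k ->
  potential ((1 - e / 2) * k) a 0 x
  <= (1 - x) + pmix (1 - x) * potential k a 0 (x * (1 + up_rate x))
             + (1 - pmix (1 - x)) * potential k a 0 x.
Proof.
move=> k_ge0; have lnD := ln_drift_phase2.
have ratioD := ler_wpM2l k_ge0 ratio_drift_phase2.
have e0 := e_gt0.
set Q := pmix (1 - x) in lnD ratioD *.
set y := x * (1 + up_rate x) in lnD ratioD *; set rx := (1 - x) / x in ratioD *.
have lnD' : - ln x / e - (1 - x) <= - (Q * ln y + (1 - Q) * ln x) / e.
  have -> : - ln x / e - (1 - x) = - (ln x + e * (1 - x)) / e by field; nonzero.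
  by rewrite ler_pM2r ?invr_gt0 // lerN2.
have ratioD' : - (k * ((1 - e / 2) * rx)) / e
               <= - (k * (Q * ((1 - y) / y) + (1 - Q) * rx)) / e.
  by rewrite ler_pM2r ?invr_gt0 // lerN2.
rewrite /potential -/rx !mul0r !subr0.
lra.
Qed.

End OneRound.

Definition phase1_end (T : nat) := (T %/ 100)%N.

Definition mid_phase1 (T : nat) := (phase1_end T %/ 2).+1.

Section Coefficients.
Variables (R : realType) (e g : R) (T : nat).

(* The coefficients of the potential at round [t], obtained backwards from round [T + 1]
   so that each round is one of the steps [potential_step_phase1/2]; the curvature
   bonus [e / (24 g)] is only claimed in the second half of phase 1. *)
Definition kappa_coef (t : nat) : R :=
  (1 - e / 2) ^+ (T.+1 - maxn t (phase1_end T).+1) * (1 + 2 * e) ^+ ((phase1_end T).+1 - t).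

Definition const_coef (t : nat) : R :=
  ((phase1_end T).+1 - t)%:R + e / (24 * g) * ((phase1_end T).+1 - maxn t (mid_phase1 T))%:R.

Definition odds_coef (t : nat) : R :=
  if (t <= phase1_end T)%N then (1 - e / 2) ^+ (mid_phase1 T - t) / (12 * g ^+ 2) else 0.

Lemma kappa_coef_ge0 t : 0 < e -> e < 1/2 -> 0 <= kappa_coef t.
Proof. by move=> e0 e1; rewrite /kappa_coef mulr_ge0 // exprn_ge0 //; lra. Qed.

Lemma odds_coef_ge0 t : e < 1/2 -> 0 <= odds_coef t.
Proof.
move=> e1; rewrite /odds_coef; case: ifP => // _.
have s_ge0 : 0 <= 1 - e / 2 by lra.
by rewrite divr_ge0 ?exprn_ge0 // mulr_ge0 ?sqr_ge0.
Qed.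

Lemma kappa_coef_phase1 t : (t <= phase1_end T)%N ->
  kappa_coef t = (1 + 2 * e) * kappa_coef t.+1.
Proof.
move=> t_le; rewrite /kappa_coef.
have -> : maxn t.+1 (phase1_end T).+1 = maxn t (phase1_end T).+1 by lia.
have -> : ((phase1_end T).+1 - t = ((phase1_end T).+1 - t.+1).+1)%N by lia.
by rewrite exprS mulrCA.
Qed.

Lemma const_coef_phase1 t : (t <= phase1_end T)%N ->
  const_coef t = const_coef t.+1 + 1 + (mid_phase1 T <= t)%N%:R * (e / (24 * g)).
Proof.
move=> t_le; rewrite /const_coef.
case: (leqP (mid_phase1 T) t) => [mid_le | t_lt].
  rewrite (maxn_idPl _) ?(leqW mid_le) //.
  have -> : ((phase1_end T).+1 - t = ((phase1_end T).+1 - t.+1).+1)%N by lia.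
  by rewrite !mulrS; ring.
have -> : ((phase1_end T).+1 - t = ((phase1_end T).+1 - t.+1).+1)%N by lia.
by rewrite (maxn_idPr _) //= mul0r mulrS; ring.
Qed.

Lemma odds_coef_phase1 t : 0 < e -> e < 1/2 -> 0 < g -> (t <= phase1_end T)%N ->
  (1 - e / 2) * odds_coef t.+1 + (mid_phase1 T <= t)%N%:R * (e / (24 * g ^+ 2))
  <= odds_coef t.
Proof.
move=> e0 e1 g0 t_le.
have M_ge0 : 0 <= 1 / (12 * g ^+ 2) by rewrite mul1r invr_ge0 mulr_ge0 ?sqr_ge0.
rewrite /odds_coef t_le; case: (leqP (mid_phase1 T) t) => [mid_le | t_lt] /=.
  rewrite (_ : mid_phase1 T - t = 0)%N ?expr0; last by lia.
  have -> : e / (24 * g ^+ 2) = e / 2 * (1 / (12 * g ^+ 2)) by field; nonzero.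
  case: ifP => _; last by rewrite mulr0 add0r; nra.
  by rewrite (_ : mid_phase1 T - t.+1 = 0)%N ?expr0; [nra | lia].
rewrite mul0r addr0 (_ : mid_phase1 T - t = (mid_phase1 T - t.+1).+1)%N; last by lia.
case: ifP => _; first by rewrite mulrA -exprS.
have s_ge0 : 0 <= 1 - e / 2 by lra.
by rewrite mulr0 divr_ge0 ?exprn_ge0 // mulr_ge0 ?sqr_ge0.
Qed.

Lemma kappa_coef_phase2 t : (phase1_end T < t <= T)%N ->
  kappa_coef t = (1 - e / 2) * kappa_coef t.+1.
Proof.
move=> /andP[t_gt t_le]; rewrite /kappa_coef.
have -> : maxn t (phase1_end T).+1 = t by lia.
have -> : maxn t.+1 (phase1_end T).+1 = t.+1 by lia.
have -> : ((phase1_end T).+1 - t = 0)%N by lia.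
have -> : ((phase1_end T).+1 - t.+1 = 0)%N by lia.
have -> : (T.+1 - t = (T.+1 - t.+1).+1)%N by lia.
by rewrite !mulr1 exprS.
Qed.

Lemma const_coef_phase2 t : (phase1_end T < t)%N -> const_coef t = 0.
Proof.
move=> t_gt; rewrite /const_coef.
have -> : ((phase1_end T).+1 - t = 0)%N by lia.
have -> : ((phase1_end T).+1 - maxn t (mid_phase1 T) = 0)%N by rewrite /mid_phase1; lia.
by rewrite mulr0 addr0.
Qed.

Lemma odds_coef_phase2 t : (phase1_end T < t)%N -> odds_coef t = 0.
Proof. by rewrite /odds_coef ltnNge => /negbTE ->. Qed.

Lemma kappa_coef_end : (phase1_end T <= T)%N -> kappa_coef T.+1 = 1.
Proof.
move=> T1_le; rewrite /kappa_coef (maxn_idPl _) // subnn.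
have -> : ((phase1_end T).+1 - T.+1 = 0)%N by lia.
by rewrite !expr0 mulr1.
Qed.

End Coefficients.

Section ValueFunction.
Variables (R : realType) (e g : R) (T : nat).
Hypotheses (e_gt0 : 0 < e) (e_lt_half : e < 1/2).
Hypotheses (g_gt0 : 0 < g) (g_lt_half : g < 1/2) (e_le_g : 4 * e <= g).

(* Lower bound on the expected loss of rounds [t..T] from [pi_{t,1} = x]: each round
   costs at least [g / 2] in expectation, hence the first term. *)
Definition value (t : nat) (x : R) : R :=
  g / 2 * (T.+1 - t)%:R
  + (1 - g) * potential e (kappa_coef e T t) (const_coef e g T t) (odds_coef e g T t) x.

Lemma value_end (x : R) : 0 < x -> (phase1_end T <= T)%N -> value T.+1 x <= 0.
Proof.
move=> x_gt0 T1_le; have := oppr_ln_le x_gt0; have := g_lt_half; have := e_gt0.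
rewrite /value subnn mulr0 add0r kappa_coef_end // const_coef_phase2 ?odds_coef_phase2 ?ltnS //.
rewrite /potential mul0r subr0 addr0 mul1r -mulrBl => e0 g1 ln_le.
by rewrite mulr_ge0_le0 ?pmulr_lle0 ?invr_gt0 //; lra.
Qed.

Variable x : R.
Hypotheses (x_gt0 : 0 < x) (x_lt1 : x < 1).

Lemma value_step_phase1 t : (t <= phase1_end T)%N ->
  value t x <= pmix g x + pmix g x * value t.+1 (x * (1 - down_rate e g x))
                        + (1 - pmix g x) * value t.+1 x.
Proof.
move=> t_le; have t_leT : (t <= T)%N by rewrite (leq_trans t_le) ?leq_div.
have step := potential_step_phase1 e_gt0 e_lt_half g_gt0 g_lt_half e_le_g x_gt0 x_lt1
  (const_coef e g T t.+1) (kappa_coef_ge0 T t.+1 e_gt0 e_lt_half)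
  (odds_coef_ge0 g T t.+1 e_lt_half) (odds_coef_phase1 e_gt0 e_lt_half g_gt0 t_le).
rewrite -kappa_coef_phase1 // -const_coef_phase1 // in step.
have g1 := g_lt_half; have := ler_wpM2l (_ : 0 <= 1 - g) step.
rewrite /value; have -> : (T.+1 - t)%:R = (T.+1 - t.+1)%:R + 1 :> R.
  by rewrite natr1; congr _%:R; lia.
rewrite /pmix; lra.
Qed.

Lemma value_step_phase2 t : (phase1_end T < t <= T)%N ->
  value t x <= pmix g (1 - x) + pmix g (1 - x) * value t.+1 (x * (1 + up_rate e g x))
                              + (1 - pmix g (1 - x)) * value t.+1 x.
Proof.
move=> /andP[t_gt t_le].
have step := potential_step_phase2 e_gt0 e_lt_half g_gt0 g_lt_half x_gt0 x_lt1
  0 (kappa_coef_ge0 T t.+1 e_gt0 e_lt_half).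
rewrite -kappa_coef_phase2 ?t_gt // in step.
have g1 := g_lt_half; have := ler_wpM2l (_ : 0 <= 1 - g) step.
have t1_gt : (phase1_end T < t.+1)%N by rewrite ltnS ltnW.
rewrite /value !odds_coef_phase2 // !const_coef_phase2 //.
have -> : (T.+1 - t)%:R = (T.+1 - t.+1)%:R + 1 :> R.
  by rewrite natr1; congr _%:R; lia.
rewrite /pmix; lra.
Qed.

End ValueFunction.

Lemma sum_ord2 (V : nmodType) (F : 'I_2 -> V) : \sum_(i < 2) F i = F ord0 + F ord_max.
Proof. by rewrite big_ord_recl big_ord1; congr (_ + F _); apply/val_inj. Qed.

Lemma update_zero_loss (R : realType) (K : nat) (eta gamma : R) (pi lt : 'I_K -> R) (I : 'I_K) :
  lt I = 0 -> update eta gamma pi lt I =1 pi.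
Proof.
move=> ltI0 i; have lhat0 j : lhat gamma pi lt I j = 0.
  by rewrite /lhat; case: eqP => [-> | _]; rewrite ?ltI0 ?mulr0 ?mul0r.
rewrite /update big1 => [|j _]; last by rewrite lhat0 mulr0.
by rewrite lhat0 subr0 mulr0 subr0 mulr1.
Qed.

Lemma two_phase_phase1 (R : realType) (T t : nat) : (t <= phase1_end T)%N ->
  two_phase R T t ord0 = 1 /\ two_phase R T t ord_max = 0.
Proof. by rewrite /two_phase /phase1_end => ->. Qed.

Lemma two_phase_phase2 (R : realType) (T t : nat) : (phase1_end T < t)%N ->
  two_phase R T t ord0 = 0 /\ two_phase R T t ord_max = 1.
Proof. by rewrite /two_phase /phase1_end ltnNge => /negbTE ->. Qed.

Section TwoPointDynamics.
Variables (R : realType) (e g : R) (T : nat).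
Hypotheses (e_gt0 : 0 < e) (e_lt_half : e < 1/2).
Hypotheses (g_gt0 : 0 < g) (g_lt_half : g < 1/2) (e_le_g : 4 * e <= g).

Definition two_point (pi : 'I_2 -> R) := 0 < pi ord0 < 1 /\ pi ord_max = 1 - pi ord0.

Lemma mix_ord0 (pi : 'I_2 -> R) : mix g pi ord0 = pmix g (pi ord0).
Proof. by []. Qed.

Lemma mix_ord_max (pi : 'I_2 -> R) : two_point pi -> mix g pi ord_max = pmix g (1 - pi ord0).
Proof. by case=> _ pi1; rewrite /mix pi1. Qed.

Lemma update_phase1 (pi : 'I_2 -> R) t : two_point pi -> (t <= phase1_end T)%N ->
  let y := pi ord0 * (1 - down_rate e g (pi ord0)) in
  update e g pi (two_phase R T t) ord0 ord0 = y /\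
  update e g pi (two_phase R T t) ord0 ord_max = 1 - y.
Proof.
move=> [/andP[x0 x1] pi1] /(two_phase_phase1 R)[l0 l1] y.
have P_gt0 := pmix_gt0 g_gt0 g_lt_half (ltW x0).
rewrite /y /update /lhat !sum_ord2 l0 l1 eqxx pi1 mix_ord0 /down_rate /=.
by rewrite !mul0r; split; field; nonzero.
Qed.

Lemma update_phase2 (pi : 'I_2 -> R) t : two_point pi -> (phase1_end T < t)%N ->
  let y := pi ord0 * (1 + up_rate e g (pi ord0)) in
  update e g pi (two_phase R T t) ord_max ord0 = y /\
  update e g pi (two_phase R T t) ord_max ord_max = 1 - y.
Proof.
move=> pi2 /(two_phase_phase2 R)[l0 l1] y; have [/andP[x0 x1] pi1] := pi2.
have Q_gt0 : 0 < pmix g (1 - pi ord0) by apply: pmix_gt0 => //; lra.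
rewrite /y /update /lhat !sum_ord2 l0 l1 eqxx (mix_ord_max pi2) pi1.
by rewrite /up_rate /= !mul0r; split; field; nonzero.
Qed.

Lemma value_le_expLoss n t (pi : 'I_2 -> R) : two_point pi -> (t + n = T.+1)%N ->
  value e g T t (pi ord0) <= expLoss e g (two_phase R T) n t pi.
Proof.
elim: n t pi => [|n IH] t pi pi2 tn.
  rewrite addn0 in tn; rewrite tn.
  by case: pi2 => /andP[x0 _] _; apply: value_end; rewrite ?leq_div.
have tn' : (t.+1 + n = T.+1)%N by lia.
have [/andP[x0 x1] pi1] := pi2.
have P_gt0 := pmix_gt0 g_gt0 g_lt_half (ltW x0).
have Q_gt0 : 0 < pmix g (1 - pi ord0) by apply: pmix_gt0 => //; lra.
rewrite /= !sum_ord2 mix_ord0 mix_ord_max // pmixC.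
case: (leqP t (phase1_end T)) => t_T1.
  have [l0 l1] := two_phase_phase1 R t_T1; have [u0 u1] := update_phase1 pi2 t_T1.
  have v_ge0 : 0 <= down_rate e g (pi ord0) by apply: down_rate_ge0.
  have v_le : down_rate e g (pi ord0) <= 1/2 by apply: down_rate_le_half.
  have pi2' : two_point (update e g pi (two_phase R T t) ord0).
    by rewrite /two_point u0 u1; split => //; apply/andP; split; nra.
  have EL0 := ler_wpM2l (ltW P_gt0) (IH _ _ pi2' tn'); rewrite u0 in EL0.
  rewrite (funext (update_zero_loss e g pi l1)).
  have EL1 := ler_wpM2l (ltW Q_gt0) (IH _ _ pi2 tn'); rewrite pmixC in EL1.
  apply: le_trans (value_step_phase1 _ _ _ _ _ _ _ t_T1) _ => //.
  rewrite l0 l1; lra.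
have [l0 l1] := two_phase_phase2 R t_T1; have [u0 u1] := update_phase2 pi2 t_T1.
have w_ge0 : 0 <= up_rate e g (pi ord0) by apply: up_rate_ge0.
have w_le : up_rate e g (pi ord0) <= (1 - pi ord0) / 2 by apply: up_rate_le_compl.
have pi2' : two_point (update e g pi (two_phase R T t) ord_max).
  by rewrite /two_point u0 u1; split => //; apply/andP; split; nra.
have EL1 := ler_wpM2l (ltW Q_gt0) (IH _ _ pi2' tn'); rewrite u0 pmixC in EL1.
rewrite (funext (update_zero_loss e g pi l0)).
have EL0 := ler_wpM2l (ltW P_gt0) (IH _ _ pi2 tn').
have t_le : (phase1_end T < t <= T)%N by rewrite t_T1; lia.
apply: le_trans (value_step_phase2 _ _ _ _ _ _ _ t_le) _ => //.
rewrite l0 l1 pmixC; lra.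
Qed.

End TwoPointDynamics.

Section Asymptotics.
Variable R : realType.

Lemma valid2_bounds (e g : R) : valid 2 e g ->
  [/\ 0 < e, e < 1/2, 0 < g, g < 1/2 & 4 * e <= g].
Proof. by case=> e0 [e1 [g0 [g1]]]; rewrite ler_pdivrMr // => eg; split => //; lra. Qed.

Lemma powR_Nratio_exprn (y : R) (m n : nat) : 0 <= y -> (0 < n)%N ->
  (y `^ (- (m%:R / n%:R))) ^+ n = (y ^+ m)^-1.
Proof.
move=> y_ge0 n_gt0; rewrite -powR_mulrn ?powR_ge0 // -powRrM mulNr mulfVK ?powR_invn //.
by rewrite pnatr_eq0 -lt0n.
Qed.

Lemma nontrivial_bounds (T : nat) (e g : R) : (0 < T)%N -> 0 <= g -> nontrivial T e g ->
  1 <= e ^+ 3 * T%:R ^+ 2 /\ g ^+ 3 * T%:R <= 1.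
Proof.
move=> T_gt0 g_ge0 [eT gT]; have Tr_gt0 : 0 < T%:R :> R by rewrite ltr0n.
split.
  have : (T%:R `^ (- (2 / 3))) ^+ 3 <= e ^+ 3.
    by rewrite ler_pXn2r ?nnegrE ?powR_ge0 // (le_trans _ eT) ?powR_ge0.
  by rewrite (powR_Nratio_exprn 2 (n := 3)) ?ler0n // -div1r ler_pdivrMr ?exprn_gt0.
have : g ^+ 3 <= (T%:R `^ (- (1 / 3))) ^+ 3 by rewrite ler_pXn2r ?nnegrE ?powR_ge0.
by rewrite (powR_Nratio_exprn 1 (n := 3)) ?ler0n // expr1 -div1r ler_pdivlMr.
Qed.

End Asymptotics.

Section PolynomialBounds.
Variable R : realFieldType.

Lemma bernoulli_ineq (u : R) (k : nat) : 0 <= u -> 1 + k%:R * u <= (1 + u) ^+ k.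
Proof.
move=> u_ge0; elim: k => [|k IH]; first by rewrite mul0r addr0.
rewrite exprS -natr1; have := ler_wpM2l (_ : 0 <= 1 + u) IH.
have : 0 <= k%:R * u * u by rewrite !mulr_ge0.
by nra.
Qed.

Lemma expr1B_bernoulli_le1 (u : R) (k : nat) : 0 <= u <= 1 -> (1 - u) ^+ k * (1 + k%:R * u) <= 1.
Proof.
case/andP=> u_ge0 u_le1; have s_ge0 : 0 <= (1 - u) ^+ k by rewrite exprn_ge0 // subr_ge0.
apply: le_trans (ler_wpM2l s_ge0 (bernoulli_ineq k u_ge0)) _.
by rewrite -exprMn exprn_ile1 //; nra.
Qed.

(* From [(1 - e/2)^k * k e <= 2], by Bernoulli's inequality. *)
Lemma decay_pow_le_sqr (e : R) (k : nat) : 0 < e -> e < 1/2 ->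
  64 <= (k%:R * e) ^+ 6 * e ^+ 2 -> (1 - e / 2) ^+ (6 * k) <= e ^+ 2.
Proof.
move=> e0 e1 big; set s := (1 - e / 2) ^+ k.
have s_ge0 : 0 <= s by rewrite exprn_ge0 //; lra.
have ke_ge0 : 0 <= k%:R * e by rewrite mulr_ge0 ?ler0n // ltW.
have sk_le : s * (k%:R * e) <= 2.
  have := @expr1B_bernoulli_le1 (e / 2) k; rewrite -/s; nra.
have sk6_le : (s * (k%:R * e)) ^+ 6 <= 2 ^+ 6.
  by rewrite ler_pXn2r ?nnegrE ?mulr_ge0 //; lra.
have two6 : (2 : R) ^+ 6 = 64 by rewrite !exprS expr0; lra.
have ke6_gt0 : 0 < (k%:R * e) ^+ 6.
  by move: big; rewrite -(pmulr_lgt0 _ (exprn_gt0 2 e0)); lra.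
rewrite exprMn two6 in sk6_le.
rewrite mulnC exprM -/s -(ler_pM2r ke6_gt0); lra.
Qed.

(* [(y^6 e^8)^3 = (e^3 y^2)^8 y^2 >= y^2], and [y >= 10^40] makes this exceed
   [(64 * 2400^6)^3]. *)
Lemma large_horizon_power (e y : R) : 0 < e -> 10 ^+ 40 <= y -> 1 <= e ^+ 3 * y ^+ 2 ->
  64 * 2400 ^+ 6 <= y ^+ 6 * e ^+ 8.
Proof.
move=> e0 y_ge ey; have ten_ge0 : (0 : R) <= 10 := ler0n _ 10.
have y_ge0 : 0 <= y by apply: le_trans y_ge; exact: exprn_ge0.
have W_ge : 10 ^+ 26 <= y ^+ 6 * e ^+ 8.
  rewrite -(ler_pXn2r (_ : 0 < 3)%N) ?nnegrE ?mulr_ge0 ?exprn_ge0 ?(ltW e0) //.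
  have -> : (y ^+ 6 * e ^+ 8) ^+ 3 = (e ^+ 3 * y ^+ 2) ^+ 8 * y ^+ 2 by ring.
  apply: le_trans (_ : (10 ^+ 40) ^+ 2 <= _).
    by rewrite -!exprM -!natrX ler_nat leq_pexp2l.
  apply: le_trans (_ : y ^+ 2 <= _); first by rewrite ler_pXn2r ?nnegrE ?exprn_ge0.
  by rewrite ler_peMl ?exprn_ge0 ?exprn_ege1.
apply: le_trans W_ge.
have -> : (10 : R) ^+ 26 = 10 ^+ 2 * (10 ^+ 4) ^+ 6 by rewrite -exprM -exprD.
apply: ler_pM; first exact: ler0n.
- by apply: exprn_ge0; exact: ler0n.
- by rewrite -natrX ler_nat.
have h : (2400 : R) <= 10 ^+ 4 by rewrite -natrX ler_nat.
by rewrite ler_pXn2r // nnegrE ?ler0n // (le_trans _ h) ?ler0n.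
Qed.

Lemma inv_eta_le (e g y : R) : 0 < e -> 0 < g -> 0 < y ->
  1 <= e ^+ 3 * y ^+ 2 -> g ^+ 3 * y <= 1 -> 1 / e <= e * y / g.
Proof.
move=> e0 g0 y0 ey gy; have g_le : g <= e ^+ 2 * y.
  rewrite -(ler_pXn2r (_ : 0 < 3)%N) ?nnegrE ?mulr_ge0 ?exprn_ge0 ?(ltW e0) ?(ltW g0) ?(ltW y0) //.
  rewrite -(ler_pM2r y0) (le_trans gy) //.
  have -> : (e ^+ 2 * y) ^+ 3 * y = (e ^+ 3 * y ^+ 2) ^+ 2 by ring.
  exact: exprn_ege1.
have -> : e * y / g = e ^+ 2 * y / g / e by field; nonzero.
by rewrite ler_pM2r ?invr_gt0 // ler_pdivlMr // mul1r.
Qed.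

Lemma gamma_horizon_ge (e g y : R) : 0 < e -> 4 * e <= g -> 27 <= y ->
  1 <= e ^+ 3 * y ^+ 2 -> 12 <= g * y.
Proof.
move=> e0 eg y_ge ey; have y0 : 0 < y by apply: lt_le_trans y_ge; exact: ltr0n.
suff eT : 3 <= e * y by have := ler_wpM2r (ltW y0) eg; lra.
have three_ge0 : (0 : R) <= 3 := ler0n _ 3.
rewrite -(ler_pXn2r (_ : 0 < 3)%N) ?nnegrE ?mulr_ge0 ?(ltW e0) ?(ltW y0) //.
have -> : (e * y) ^+ 3 = (e ^+ 3 * y ^+ 2) * y by ring.
have : 3 ^+ 3 = 27 :> R by rewrite !exprS expr0; lra.
by have := ler_wpM2r (ltW y0) ey; lra.
Qed.

End PolynomialBounds.

Section InitialRound.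
Variable R : realType.

Lemma horizon_decay (e : R) (T : nat) : 0 < e -> e < 1/2 -> (10 ^ 40 <= T)%N ->
  (100 %| T)%N -> 1 <= e ^+ 3 * T%:R ^+ 2 -> (1 - e / 2) ^+ (phase1_end T %/ 2) <= e ^+ 2.
Proof.
move=> e0 e1 T_ge T_dvd eT; set k := (phase1_end T %/ 2 %/ 6)%N.
have Tr_ge : 10 ^+ 40 <= T%:R :> R by rewrite -natrX ler_nat.
have {T_ge}T_ge2400 : (2400 <= T)%N.
  by apply: leq_trans T_ge; apply: (@leq_trans (10 ^ 4)) => //; rewrite leq_pexp2l.
have T_le : (T <= 2400 * k)%N by rewrite /k /phase1_end; lia.
have s_ge0 : 0 <= 1 - e / 2 by lra.
apply: le_trans (@decay_pow_le_sqr R e k e0 e1 _).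
  by rewrite ler_wiXn2l //; [lra | rewrite /k; lia].
have big := large_horizon_power e0 Tr_ge eT.
have Te_le : (T%:R * e) ^+ 6 <= 2400 ^+ 6 * (k%:R * e) ^+ 6.
  rewrite -exprMn ler_pXn2r ?nnegrE ?mulr_ge0 ?ler0n ?(ltW e0) //.
  by rewrite mulrA -natrM ler_wpM2r ?ler_nat ?(ltW e0).
have : 64 * 2400 ^+ 6 <= 2400 ^+ 6 * ((k%:R * e) ^+ 6 * e ^+ 2).
  apply: le_trans big _.
  have -> : T%:R ^+ 6 * e ^+ 8 = (T%:R * e) ^+ 6 * e ^+ 2 :> R by ring.
  by rewrite mulrA ler_wpM2r // exprn_ge0 // ltW.
have c_gt0 : 0 < 2400 ^+ 6 :> R by apply: exprn_gt0; exact: ltr0n.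
by rewrite mulrC ler_pM2l.
Qed.

Lemma kappa_coef_start (e : R) (T : nat) : 0 < e -> e < 1/2 -> (100 %| T)%N ->
  (1 - e / 2) ^+ (phase1_end T %/ 2) <= e ^+ 2 -> kappa_coef e T 1 <= e ^+ 2.
Proof.
move=> e0 e1 T_dvd decay; have s_ge0 : 0 <= 1 - e / 2 by lra.
have round_le1 : (1 - e / 2) ^+ 4 * (1 + 2 * e) <= 1.
  by have := @expr1B_bernoulli_le1 R (e / 2) 4; rewrite (_ : 4%:R * (e / 2) = 2 * e); [apply; lra | lra].
rewrite /kappa_coef (maxn_idPr _) // subSS subn1 /=.
have -> : (T - phase1_end T = 4 * phase1_end T + (T - 5 * phase1_end T))%N.
  by rewrite /phase1_end; lia.
rewrite exprD exprM mulrAC -exprMn.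
apply: le_trans (ler_wpM2r (exprn_ge0 _ s_ge0) (exprn_ile1 _ _ round_le1)) _.
  by rewrite mulr_ge0 ?exprn_ge0 //; lra.
rewrite mul1r (le_trans _ decay) // ler_wiXn2l //; first lra.
by rewrite /phase1_end; lia.
Qed.

Lemma odds_coef_start (e g : R) (T : nat) : 0 < e -> e <= g -> (0 < phase1_end T)%N ->
  (1 - e / 2) ^+ (phase1_end T %/ 2) <= e ^+ 2 -> odds_coef e g T 1 <= 1.
Proof.
move=> e0 e_le_g T1_gt0 decay; have g0 : 0 < g by apply: lt_le_trans e_le_g.
rewrite /odds_coef T1_gt0 /mid_phase1 subn1 /= ler_pdivrMr ?mul1r; last by nonzero.
apply: le_trans decay _.
have : e ^+ 2 <= g ^+ 2 by rewrite ler_pXn2r ?nnegrE ?(ltW e0) ?(ltW g0).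
by have := sqr_ge0 g; lra.
Qed.

Lemma const_coef_start (e g : R) (T : nat) :
  const_coef e g T 1 = (phase1_end T)%:R + e / (24 * g) * (phase1_end T - phase1_end T %/ 2)%:R.
Proof. by rewrite /const_coef /mid_phase1 subn1 (maxn_idPr _) //= subSS. Qed.

End InitialRound.

Section Regret.
Variable R : realType.

Lemma value_start_ge (e g : R) (T : nat) : 0 < e -> e < 1/2 -> 0 < g -> g < 1/2 ->
  (100 %| T)%N -> 1 / e <= e * T%:R / g -> 12 <= g * T%:R ->
  kappa_coef e T 1 <= e ^+ 2 -> odds_coef e g T 1 <= 1 ->
  1 / (192 * 100) * (1 / e) + 1 / (384 * 100) * (e * T%:R * 2 / g) + 1 / 4 * (g * T%:R)
  <= value e g T 1 (1 / 2) - (phase1_end T)%:R.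
Proof.
move=> e0 e1 g0 g1 T_dvd inv_e_le gT_ge kappa_le odds_le.
have odds_ge0 : 0 <= odds_coef e g T 1 by apply: odds_coef_ge0.
set T1 := phase1_end T; set H := (T1 - T1 %/ 2)%N.
have TrN : T%:R = 100 * T1%:R :> R by rewrite /T1 /phase1_end -natrM mulnC divnK.
have H_ge : T%:R / 200 <= H%:R :> R.
  have : (T1 <= 2 * H)%N by rewrite /H; lia.
  by rewrite -(ler_nat R) natrM TrN; lra.
have ln2_ge0 : 0 <= - ln (1 / 2 : R) by rewrite oppr_ge0 ln_le0 //; lra.
have kappa_e_le : kappa_coef e T 1 / e <= 1.
  by rewrite ler_pdivrMr // mul1r (le_trans kappa_le) // expr2; nra.
have bonus : e * T%:R / ((96 * 100) * g) <= (1 - g) * (e / (24 * g) * H%:R).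
  have eg_ge0 : 0 <= e / (24 * g) by rewrite divr_ge0 ?mulr_ge0; lra.
  have := ler_wpM2l eg_ge0 H_ge.
  have -> : e * T%:R / ((96 * 100) * g) = 1 / 2 * (e / (24 * g) * (T%:R / 200)) by field; nonzero.
  have : 0 <= e / (24 * g) * H%:R by rewrite mulr_ge0 ?ler0n.
  nra.
rewrite /value subn1 /= const_coef_start /potential -/T1 -/H.
have -> : (1 - 1 / 2) / (1 / 2) = 1 :> R by field.
have -> : 1 / 2 / (1 - 1 / 2) = 1 :> R by field.
have -> : e * T%:R * 2 / g = 2 * (e * T%:R / g) by field; nonzero.
rewrite (_ : e * T%:R / ((96 * 100) * g) = e * T%:R / g / (96 * 100)) in bonus; last by field; nonzero.
have : 0 <= (1 - g) * (- ln (1 / 2) / e) by rewrite mulr_ge0 ?divr_ge0 //; lra.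
have : (1 - g) * (kappa_coef e T 1 / e) <= 1 by have := divr_ge0 (kappa_coef_ge0 T 1 e0 e1) (ltW e0); nra.
have : (1 - g) * odds_coef e g T 1 <= 1 by nra.
have : g * T%:R = 100 * (g * T1%:R) by rewrite TrN; ring.
lra.
Qed.

Lemma sum_two_phase_ord0 (T : nat) :
  \sum_(1 <= t < T.+1) two_phase R T t ord0 = (phase1_end T)%:R.
Proof.
rewrite (big_cat_nat (n := (phase1_end T).+1)) //=; last by rewrite ltnS leq_div.
rewrite [X in _ + X]big1_seq ?addr0 => [|t]; last first.
  by move=> /andP[_]; rewrite mem_index_iota => /andP[t_gt _]; case: (two_phase_phase2 R t_gt).
rewrite (eq_big_nat _ _ (F2 := fun=> 1)) ?sumr_const_nat ?subn1 // => t /andP[_].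
by rewrite ltnS => /(two_phase_phase1 R)[].
Qed.

Lemma expRegret_ge_value (e g : R) (T : nat) : 0 < e -> e < 1/2 -> 0 < g -> g < 1/2 ->
  4 * e <= g -> value e g T 1 (1 / 2) - (phase1_end T)%:R <= expRegret e g (two_phase R T) T.
Proof.
move=> e0 e1 g0 g1 eg; rewrite /expRegret lerB //.
  have half : two_point (fun _ : 'I_2 => 1 / 2 : R) by split; [apply/andP; split | ]; lra.
  exact: value_le_expLoss half (add1n T).
by rewrite big_ord_recl ge_min sum_two_phase_ord0 lexx.
Qed.

Lemma two_phase_regret_lower_bound (e g : R) (T : nat) :
  valid 2 e g -> nontrivial T e g -> (10 ^ 40 <= T)%N -> (100 %| T)%N ->
  1 / (192 * 100) * (1 / e) + 1 / (384 * 100) * (e * T%:R * 2%:R / g) + 1 / 4 * (g * T%:R)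
  <= expRegret e g (two_phase R T) T.
Proof.
case/valid2_bounds=> e0 e1 g0 g1 eg nt T_large T_dvd.
have T_ge : (2700 <= T)%N.
  by apply: leq_trans T_large; apply: (@leq_trans (10 ^ 4)) => //; rewrite leq_pexp2l.
have [eT gT] := nontrivial_bounds (leq_trans (isT : 0 < 2700)%N T_ge) (ltW g0) nt.
have {T_large}decay := horizon_decay e0 e1 T_large T_dvd eT.
apply: le_trans _ (expRegret_ge_value T e0 e1 g0 g1 eg); apply: value_start_ge => //.
- by apply: inv_eta_le => //; rewrite ltr0n (leq_trans _ T_ge).
- by apply: (gamma_horizon_ge e0 eg _ eT); rewrite ler_nat (leq_trans _ T_ge).
- exact: kappa_coef_start.
apply: odds_coef_start => //; first lra.
by rewrite /phase1_end divn_gt0 // (leq_trans _ T_ge).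
Qed.

End Regret.

Theorem theorem3 (R : realType) (eta gamma : nat -> R) :
  (forall T : nat, (0 < T)%N -> (100 %| T)%N ->
     valid 2 (eta T) (gamma T) /\ nontrivial T (eta T) (gamma T)) ->
  exists c1 c2 c3 : R, 0 < c1 /\ 0 < c2 /\ 0 < c3 /\
  exists T0 : nat, forall T : nat, (T0 <= T)%N -> (0 < T)%N -> (100 %| T)%N ->
    c1 * (1 / eta T) + c2 * (eta T * T%:R * 2%:R / gamma T) + c3 * (gamma T * T%:R)
    <= expRegret (eta T) (gamma T) (two_phase R T) T.
Proof.
move=> params; exists (1 / (192 * 100)), (1 / (384 * 100)), (1 / 4).
do 3!(split; first lra); exists (10 ^ 40)%N => T T_ge T_gt0 T_dvd.
have [valid_T nontrivial_T] := params T T_gt0 T_dvd.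
exact: two_phase_regret_lower_bound.
Qed.
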